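(* Let $n\ge1$, $d\ge0$, let $\lambda$ be a partition and $\beta\in\mathsf{B}_n$ with $\bm{l}(\lambda)\le n$, $\bm{l}(\beta)\le n$ and $|\lambda|+|\beta|=d$, and let $\alpha$ be a composition of $d$ with at most $n$ parts. If $\bm\lambda(\alpha)$ is not dominated by $\bm\lambda(\phi(\lambda,\beta))$, then $C^{\alpha}_{\lambda,\beta}=0$.
   Context: Let $\mathbf{x}=\{x_1,\dots,x_n\}$. A composition is a finite sequence of positive integers $\beta=(\beta_1,\dots,\beta_k)$, length $\bm{l}(\beta)=k$, size $|\beta|=\sum\beta_i$; a partition is a weakly decreasing composition; $\bm\lambda(\alpha)$ is the partition obtained by sorting the parts of $\alpha$ decreasingly. A partition $\lambda$ dominates $\mu$ if $\sum_{i=1}^k\lambda_i\ge\sum_{i=1}^k\mu_i$ for all $k$. $s_\lambda(x_1,\dots,x_n)$ is the Schur polynomial. Composition tableaux: the diagram of $\alpha$ has $\alpha_i$ cells in row $i$ (from the top, cells $(i,j)$ in matrix notation); a composition tableau of shape $\alpha$ is a filling $T$ by positive integers with (CT1) rows weakly decreasing left to right; (CT2) leftmost column strictly increasing top to bottom; (CT3) for cells $(i,k),(j,k)$ with $i<j$: if $\alpha_i\ge\alpha_j$ (and $k\ge2$) then $T(j,k)<T(i,k)$ or $T(i,k-1)<T(j,k)$; if $\alpha_i<\alpha_j$ then $T(j,k)<T(i,k)$ or $T(i,k)<T(j,k+1)$. The quasisymmetric Schur polynomial is $\mathcal{S}_\alpha(x_1,\dots,x_n)=\sum_T\prod_i x_i^{\#\{\text{entries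 }=i\}}$ over composition tableaux of shape $\alpha$ with entries in $\{1,\dots,n\}$; the $\mathcal{S}_\alpha$ with $\bm{l}(\alpha)\le n$ form a basis of the ring $\mathit{QSym}_n$ of quasisymmetric polynomials in $\mathbf{x}$. $C^{\alpha}_{\lambda,\beta}$ denotes the coefficient of $\mathcal{S}_\alpha$ in the expansion of $s_\lambda\,\mathcal{S}_\beta$ in this basis. A composition $\alpha$ is inverting if for each $i$ with $1<i\le\max_j\alpha_j$ there exist $s<t$ with $\alpha_s=i$, $\alpha_t=i-1$. Writing uniquely $\alpha=\gamma\,k^{i_k}\cdots1^{i_1}$ ($i_j\ge1$, $\gamma$ containing none of $1,\dots,k$, $k\ge0$ maximal), $\alpha$ is pure if $k$ is even. $\mathsf{B}_n$ is the set of pure and inverting compositions of length at most $n$. The map $\phi$: given $\lambda,\beta$ as in the claim, if $\bm{l}(\lambda)>\bm{l}(\beta)$ append $\bm{l}(\lambda)-\bm{l}(\beta)$ zeros after the last part of $\beta$; then for $1\le i\le\bm{l}(\lambda)$ add $\lambda_i$ to the $i$-th largest part of the padded $\beta$, where parts are compared by value and if $\beta_j=\beta_k$ with $j<k$ then $\beta_j$ is considered smaller. The result is $\phi(\lambda,\beta)$. *)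

From HB Require Import structures.
From mathcomp Require Import all_boot all_order all_algebra.
From mathcomp Require Export mpoly.
Set Implicit Arguments. Unset Strict Implicit. Unset Printing Implicit Defensive.
Import Order.TTheory GRing.Theory Num.Theory.

Definition is_composition (a : seq nat) : bool := all (fun x => 0 < x) a.
Definition is_partition (l : seq nat) : bool :=
  is_composition l && sorted geq l.

Definition sort_dec (a : seq nat) : seq nat := sort geq a.

Definition dominates (lam mu : seq nat) : Prop :=
  forall k, sumn (take k mu) <= sumn (take k lam).

Definition inverting (a : seq nat) : Prop :=
  forall i, 1 < i -> i <= \max_(x <- a) x ->
    exists s t, [/\ s < t, t < size a, nth 0 a s = i & nth 0 a t = i.-1].

Definition stair_tail (k : nat) (ms : seq nat) : seq nat :=
  flatten [seq nseq (nth 0 ms j) (k - j) | j <- iota 0 k].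

(* alpha = gamma k^{i_k} ... 1^{i_1}, i_j >= 1, gamma contains none of 1..k *)
Definition tail_decomp (a : seq nat) (k : nat) : Prop :=
  exists gamma ms, [/\ size ms = k, all (fun m => 0 < m) ms,
    all (fun x => x \notin iota 1 k) gamma & a = gamma ++ stair_tail k ms].

Definition pure (a : seq nat) : Prop :=
  exists k, [/\ tail_decomp a k, ~~ odd k & forall k', tail_decomp a k' -> k' <= k].

Definition in_Bn (n : nat) (b : seq nat) : Prop :=
  [/\ is_composition b, size b <= n, pure b & inverting b].

Definition pad_to (m : nat) (b : seq nat) : seq nat := b ++ nseq (m - size b) 0.

(* rank (0-indexed) of position j of b in decreasing order, where among equal
   values the later position counts as larger *)
Definition rank_dec (b : seq nat) (j : nat) : nat :=
  count (fun k => (nth 0 b j < nth 0 b k) || ((nth 0 b j == nth 0 b k) && (j < k)))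
        (iota 0 (size b)).

Definition phi (lam beta : seq nat) : seq nat :=
  let b := pad_to (size lam) beta in
  [seq nth 0 b j + nth 0 lam (rank_dec b j) | j <- iota 0 (size b)].

Fixpoint words (n len : nat) : seq (seq nat) :=
  if len is len'.+1 then [seq x :: w | x <- iota 1 n, w <- words n len'] else [:: [::]].

Fixpoint fillings (n : nat) (sh : seq nat) : seq (seq (seq nat)) :=
  if sh is r :: sh' then [seq w :: T | w <- words n r, T <- fillings n sh'] else [:: [::]].

(* entry T(i,k), 0-indexed *)
Definition ent (T : seq (seq nat)) (i k : nat) : nat := nth 0 (nth [::] T i) k.

Definition is_ssyt (T : seq (seq nat)) : bool :=
  all (fun r => sorted leq r) T &&
  [forall i : 'I_(size T), forall k : 'I_(size (nth [::] T i.+1)),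
      ent T i k < ent T i.+1 k].

(* composition tableau of shape a (conditions CT1, CT2, CT3), 0-indexed *)
Definition is_ct (a : seq nat) (T : seq (seq nat)) : bool :=
  let l := size a in
  all (fun r => sorted geq r) T &&
  [forall i : 'I_l, forall j : 'I_l, (i < j) ==> (ent T i 0 < ent T j 0)] &&
  [forall i : 'I_l, forall j : 'I_l, forall k : 'I_(\max_(x <- a) x),
     ((i < j) && (k < nth 0 a i) && (k < nth 0 a j)) ==>
     (if nth 0 a j <= nth 0 a i then
        (0 < k) ==> ((ent T j k < ent T i k) || (ent T i k.-1 < ent T j k))
      else (ent T j k < ent T i k) || (ent T i k < ent T j k.+1))].

Local Open Scope ring_scope.

(* x^T, with entry e standing for the variable x_e = 'X_(e-1) *)
Definition mono (n : nat) (T : seq (seq nat)) : {mpoly rat[n]} :=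
  \prod_(i < n) 'X_i ^+ count_mem i.+1 (flatten T).

Definition schur (n : nat) (lam : seq nat) : {mpoly rat[n]} :=
  \sum_(T <- fillings n lam | is_ssyt T) mono n T.

Definition qschur (n : nat) (a : seq nat) : {mpoly rat[n]} :=
  \sum_(T <- fillings n a | is_ct a T) mono n T.

Fixpoint comps_upto (k d : nat) : seq (seq nat) :=
  if k is k'.+1 then
    (if d == 0%N then [:: [::]] else [::]) ++
    [seq p :: s | p <- iota 1 d, s <- comps_upto k' (d - p)]
  else (if d == 0%N then [:: [::]] else [::]).

(* Compare the coefficients of x^a, where a is alpha right-aligned in n slots.
   In a filling whose columns have distinct entries (semistandard tableaux and
   composition tableaux both do), any k letters fill at most top_k(shape) cells,
   top_k being the sum of the k largest parts: column c contributes at most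
   min(k, #rows longer than c).  Since top_k lam + top_k beta <= top_k phi(lam,beta),
   non-dominance at k kills x^a in s_lam * S_beta.  On the other side, a composition
   tableau of shape gamma and content a forces top_k alpha <= top_k gamma for all k,
   and, unless gamma = alpha, a strictly larger weight sum_i i a_i: the canonical
   tableau, with row j constantly n - l + j + 1, is the only one of its shape with
   maximal entry sum.  The system for the c_gamma is thus triangular, and downward
   induction on the weight gives c_alpha = 0. *)

From HB Require Import structures.
From mathcomp Require Import all_boot all_order all_algebra zify.
From mathcomp Require Import mpoly.
Set Implicit Arguments. Unset Strict Implicit. Unset Printing Implicit Defensive.
Import GRing.Theory Num.Theory.

Lemma geq_transitive : transitive geq.
Proof. exact: rev_trans leq_trans. Qed.

Lemma geq_total : total geq.
Proof. by move=> a b; exact: leq_total. Qed.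

Lemma sort_dec_sorted s : sorted geq (sort_dec s).
Proof. exact: sort_sorted geq_total s. Qed.

Lemma sort_dec_id s : sorted geq s -> sort_dec s = s.
Proof. by move=> so; rewrite /sort_dec sorted_sort //; exact: geq_transitive. Qed.

Lemma leq_nth_sorted_geq (s : seq nat) i j :
  sorted geq s -> i <= j -> nth 0 s j <= nth 0 s i.
Proof.
move=> so hij; case: (ltnP j (size s)) => hj; last by rewrite nth_default.
have := sorted_leq_nth geq_transitive leqnn 0 so.
by apply; rewrite ?inE ?hj //; apply: leq_ltn_trans hj.
Qed.

Lemma sorted_geq_nseq m v : sorted geq (nseq m v).
Proof. by elim: m => [|[|m] IH] //=; rewrite leqnn. Qed.

Lemma sumn_take k s : sumn (take k s) = \sum_(i < minn k (size s)) nth 0 s i.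
Proof.
rewrite sumnE (big_nth 0) size_take_min big_mkord.
by apply: eq_bigr => i _; rewrite nth_take // (leq_trans (ltn_ord i)) ?geq_minl.
Qed.

Lemma card_ord_lt N k : #|[set r : 'I_N | r < k]| = minn k N.
Proof.
rewrite cardsE -sum1_card -(big_mkord (fun r => r < k) (fun _ => 1)).
elim: N => [|N IH]; first by rewrite big_geq // minn0.
by rewrite big_mkcond big_nat_recr //= -big_mkcond IH; case: (ltnP N k); lia.
Qed.

Lemma sum_ord_lt_nth N k t : size t = N ->
  \sum_(r in [set r : 'I_N | r < k]) nth 0 t r = sumn (take k t).
Proof.
move=> <-; rewrite sumn_take (big_ord_widen _ _ (geq_minr _ _)).
by apply: eq_bigl => r; rewrite inE ltn_min ltn_ord andbT.
Qed.

Lemma mem_leq_sumn x s : x \in s -> x <= sumn s.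
Proof.
elim: s => //= y s IH; rewrite inE => /orP[/eqP ->|/IH]; first exact: leq_addr.
by move/leq_trans; apply; apply: leq_addl.
Qed.

Lemma sum_ord_lt M x : \sum_(c < M) (c < x) = minn x M.
Proof.
rewrite -card_ord_lt -sum1_card [RHS]big_mkcond /=.
by apply: eq_bigr => c _; rewrite inE; case: (c < x).
Qed.

Lemma sum_count_lt M s : all (fun x => x <= M) s ->
  \sum_(c < M) count (fun x => c < x) s = sumn s.
Proof.
elim: s => [|x s IH] /=; first by rewrite big1.
by case/andP=> xM sM; rewrite big_split /= IH // sum_ord_lt (minn_idPl xM).
Qed.

Lemma count_take_sorted_geq c k t : sorted geq t ->
  count (fun x => c < x) (take k t) = minn k (count (fun x => c < x) t).
Proof.
elim: t k => [|x t IH] [|k] //= so; rewrite ?minn0 ?min0n //.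
case: ltnP => [cx|xc]; first by rewrite IH ?(path_sorted so) // add1n minnSS.
have zero u : {subset u <= t} -> count (fun y => c < y) u = 0.
  move=> ut; apply/eqP; rewrite -leqn0 leqNgt -has_count; apply/hasP => -[y /ut yt].
  move: so; rewrite (path_sortedE geq_transitive) => /andP[/allP le_x _].
  by rewrite ltnNge (leq_trans (le_x y yt) xc).
by rewrite !zero ?minn0 // => y /mem_take.
Qed.

(** * Sums of the k largest parts *)

Definition top_sum (k : nat) (s : seq nat) : nat := sumn (take k (sort_dec s)).

Lemma top_sum_sorted k s : sorted geq s -> top_sum k s = sumn (take k s).
Proof. by move=> so; rewrite /top_sum sort_dec_id. Qed.

Lemma top_sum_conjugate k s :
  top_sum k s = \sum_(c < sumn s) minn k (count (fun x => c < x) s).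
Proof.
rewrite /top_sum -(@sum_count_lt (sumn s)); last first.
  by apply/allP => x /mem_take; rewrite mem_sort; apply: mem_leq_sumn.
apply: eq_bigr => c _; rewrite count_take_sorted_geq ?sort_dec_sorted //.
by congr minn; apply/permP; rewrite perm_sort.
Qed.

Lemma top_sum_nseq0 k z s : top_sum k (nseq z 0 ++ s) = top_sum k s.
Proof.
rewrite !top_sum_conjugate sumn_cat sumn_nseq.
by apply: eq_bigr => c _; rewrite count_cat count_nseq.
Qed.

Lemma leq_sum_heavier_set N (f : 'I_N -> nat) (R I : {set 'I_N}) :
  #|R| <= #|I| -> (forall i j, i \in I -> j \notin I -> f j <= f i) ->
  \sum_(j in R) f j <= \sum_(i in I) f i.
Proof.
move=> hc hf.
rewrite (big_setID I) [X in _ <= X](big_setID R) /= setIC leq_add2l.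
have hc' : #|R :\: I| <= #|I :\: R|.
  by move: hc; rewrite -(cardsID I R) -(cardsID R I) setIC leq_add2l.
have [E|[i0 Hi0]] := set_0Vmem (I :\: R).
  by move: hc'; rewrite E cards0 leqn0 cards_eq0 => /eqP ->; rewrite big_set0.
have [im Him Hmin] : {im | im \in I :\: R & forall i, i \in I :\: R -> f im <= f i}.
  by case: (arg_minnP f Hi0) => j Hj Hm; exists j.
apply: (@leq_trans (\sum_(j in R :\: I) f im)).
  apply: leq_sum => j; rewrite inE => /andP[hj _].
  by apply: hf hj; move: Him; rewrite inE => /andP[].
apply: (@leq_trans (\sum_(j in I :\: R) f im)); last exact: leq_sum.
by rewrite !sum_nat_const leq_mul2r hc' orbT.
Qed.

Lemma sum_set_leq_sumn_take N k t (R : {set 'I_N}) :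
  sorted geq t -> size t = N -> #|R| <= k ->
  \sum_(r in R) nth 0 t r <= sumn (take k t).
Proof.
move=> so st hR; rewrite -(sum_ord_lt_nth k st).
apply: leq_sum_heavier_set => [|i j]; rewrite ?card_ord_lt ?leq_min ?hR /=.
  by rewrite (leq_trans (max_card _)) ?card_ord.
by rewrite !inE -leqNgt => hi hj; apply: leq_nth_sorted_geq; rewrite // ltnW ?(leq_trans hi hj).
Qed.

Lemma sort_dec_perm_ord s : exists2 sg : 'I_(size s) -> 'I_(size s),
  injective sg & forall i : 'I_(size s), nth 0 s i = nth 0 (sort_dec s) (sg i).
Proof.
have hp : perm_eq s (sort_dec s) by rewrite perm_sym perm_sort.
have [Is hIs hs] := perm_iotaP 0 hp.
have uI : uniq Is by rewrite (perm_uniq hIs) iota_uniq.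
have szI : size Is = size s by rewrite (perm_size hIs) size_iota size_sort.
have ltI i : i < size s -> nth 0 Is i < size s.
  move=> hi; have : nth 0 Is i \in iota 0 (size (sort geq s)).
    by rewrite -(perm_mem hIs) mem_nth // szI.
  by rewrite mem_iota size_sort.
exists (fun i => Ordinal (ltI _ (ltn_ord i))) => [i j /(congr1 val) /= /eqP|i /=].
  by rewrite nth_uniq ?szI // => /eqP/val_inj.
by rewrite {1}hs (nth_map 0) // szI.
Qed.

Lemma leq_sum_top_sum N k s (I : {set 'I_N}) : size s = N -> #|I| <= k ->
  \sum_(i in I) nth 0 s i <= top_sum k s.
Proof.
move=> st; move: I; rewrite -st => I hI.
have [sg sg_inj hsg] := sort_dec_perm_ord s.
rewrite (eq_bigr _ (fun i _ => hsg i)).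
rewrite -(big_imset (fun r : 'I_(size s) => nth 0 (sort_dec s) r)) /=; last first.
  by move=> x y _ _ /sg_inj.
apply: sum_set_leq_sumn_take; rewrite ?sort_dec_sorted ?size_sort //.
by rewrite card_imset.
Qed.

Lemma top_sum_attained N k s : size s = N ->
  exists2 J : {set 'I_N}, #|J| <= k & \sum_(i in J) nth 0 s i = top_sum k s.
Proof.
move=> st; rewrite -st.
have [sg sg_inj hsg] := sort_dec_perm_ord s.
exists (sg @^-1: [set r : 'I_(size s) | r < k]).
  by rewrite card_preimset // card_ord_lt geq_minl.
rewrite (eq_bigr _ (fun i _ => hsg i)) /top_sum.
rewrite -(@sum_ord_lt_nth (size s)) ?size_sort //.
by rewrite [RHS](reindex_inj sg_inj); apply: eq_bigl => i; rewrite !inE.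
Qed.

Lemma top_sum_perm k s t : perm_eq s t -> top_sum k s = top_sum k t.
Proof.
move=> st; rewrite !top_sum_conjugate (perm_sumn st).
by apply: eq_bigr => c _; rewrite (permP st).
Qed.

Lemma sub_in_count_lt (T : eqType) (a b : pred T) s :
  {in s, subpred a b} -> (exists2 x, x \in s & b x && ~~ a x) ->
  count a s < count b s.
Proof.
move=> hab [x xs /andP[bx nax]].
rewrite -[count b s]size_filter -(count_predC a) count_filter.
rewrite (@eq_in_count _ (predI a b) a) => [|y ys /=]; last first.
  by case ay: (a y); rewrite // (hab y ys ay).
rewrite -[X in X < _]addn0 ltn_add2l -has_count.
by apply/hasP; exists x; rewrite // mem_filter bx.
Qed.

Definition outranks (b : seq nat) (k j : nat) : bool :=
  (nth 0 b j < nth 0 b k) || ((nth 0 b j == nth 0 b k) && (j < k)).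

Section Rank.
Variable b : seq nat.
Local Notation N := (size b).

Lemma outranks_trans i j k : outranks b j i -> outranks b k j -> outranks b k i.
Proof.
rewrite /outranks => /orP[h1|/andP[/eqP e1 h1]] /orP[h2|/andP[/eqP e2 h2]].
- by rewrite (ltn_trans h1 h2).
- by rewrite -e2 h1.
- by rewrite e1 h2.
- by rewrite e1 e2 eqxx (ltn_trans h1 h2) orbT.
Qed.

Lemma outranks_total j k : j != k -> outranks b j k || outranks b k j.
Proof. by move=> hjk; rewrite /outranks; case: ltngtP => //= _; rewrite orbC -neq_ltn. Qed.

Lemma rank_dec_lt j : j < N -> rank_dec b j < N.
Proof.
move=> hj; rewrite -[X in _ < X](size_iota 0) -count_predT.
by apply: sub_in_count_lt => [//|]; exists j; rewrite ?mem_iota //= ltnn eqxx ltnn.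
Qed.

Lemma rank_dec_outranks j k : outranks b k j -> k < N -> rank_dec b k < rank_dec b j.
Proof.
move=> hkj hk; apply: sub_in_count_lt => [x _|]; first exact: outranks_trans hkj.
by exists k; rewrite ?mem_iota // ltnn eqxx ltnn andbT.
Qed.

Definition rank_ord (j : 'I_N) : 'I_N := Ordinal (rank_dec_lt (ltn_ord j)).

Lemma rank_ord_inj : injective rank_ord.
Proof.
move=> j k /(congr1 val) /= e; apply/val_inj/eqP; apply/negP => /negP hne.
by case/orP: (outranks_total hne) => /rank_dec_outranks; rewrite ?ltn_ord e ltnn => /(_ isT).
Qed.

Lemma leq_nth_rank_dec i j :
  j < N -> rank_dec b i < rank_dec b j -> nth 0 b j <= nth 0 b i.
Proof.
move=> hj hr; have hne : i != j by apply: contraTneq hr => ->; rewrite ltnn.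
case/orP: (outranks_total hne) => [/orP[/ltnW //|/andP[/eqP -> _]] //|].
by move/rank_dec_outranks => /(_ hj); rewrite ltnNge ltnW.
Qed.

Variable k : nat.
Local Notation top_ranked := (rank_ord @^-1: [set r : 'I_N | r < k]).

Lemma card_top_ranked : #|top_ranked| = minn k N.
Proof. by rewrite card_preimset ?card_ord_lt //; apply: rank_ord_inj. Qed.

Lemma sum_top_ranked_nth_rank t : size t <= N ->
  \sum_(j in top_ranked) nth 0 t (rank_dec b j) = sumn (take k t).
Proof.
move=> tN; pose t' := t ++ nseq (N - size t) 0.
have -> : sumn (take k t) = sumn (take k t').
  rewrite /t' take_cat; case: ltnP => // tk.
  rewrite sumn_cat take_oversize // -{1}[sumn t]addn0; congr (_ + _).
  by elim: (N - size t) (k - size t) => [|z IH] [|m] //=; rewrite -IH.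
rewrite -(@sum_ord_lt_nth N k t') ?size_cat ?size_nseq ?subnKC //.
rewrite [RHS](reindex_inj rank_ord_inj); apply: eq_big => j; first by rewrite !inE.
by rewrite /t' nth_cat; case: ltnP => // h _; rewrite nth_nseq nth_default ?if_same.
Qed.

Lemma sum_top_ranked : \sum_(j in top_ranked) nth 0 b j = top_sum k b.
Proof.
apply/eqP; rewrite eqn_leq leq_sum_top_sum ?card_top_ranked ?geq_minl //=.
have [J hJ <-] := top_sum_attained k (erefl N).
apply: leq_sum_heavier_set => [|i j].
  by rewrite card_top_ranked leq_min hJ (leq_trans (max_card _)) ?card_ord.
rewrite !inE -leqNgt => hi hj; apply: leq_nth_rank_dec => //.
exact: leq_trans hi hj.
Qed.

End Rank.

Lemma leq_top_sum_phi lam beta k :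
  sumn (take k lam) + top_sum k beta <= top_sum k (phi lam beta).
Proof.
set b := pad_to (size lam) beta.
have sb : size b = maxn (size lam) (size beta) by rewrite size_cat size_nseq; lia.
have sphi : size (phi lam beta) = size b by rewrite size_map size_iota.
have nphi (j : 'I_(size b)) : nth 0 (phi lam beta) j = nth 0 b j + nth 0 lam (rank_dec b j).
  by rewrite (nth_map 0) ?size_iota // nth_iota.
have <- : top_sum k b = top_sum k beta.
  by rewrite (top_sum_perm _ (permEl (perm_catC _ _))) top_sum_nseq0.
rewrite -sum_top_ranked -(@sum_top_ranked_nth_rank b k lam) ?sb ?leq_maxl //.
rewrite addnC -big_split /= (eq_bigr _ (fun j _ => esym (nphi j))).
by apply: leq_sum_top_sum; rewrite ?card_top_ranked ?geq_minl.
Qed.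

(** * Fillings with distinct column entries *)

Definition is_word (n : nat) (w : seq nat) : bool := all (fun x => 0 < x <= n) w.

Lemma mem_words n len w : (w \in words n len) = (size w == len) && is_word n w.
Proof.
elim: len w => [|len IH] w /=; first by rewrite inE; case: w.
apply/allpairsP/idP => [[[x w'] /= [xn w'n ->]]|].
  by move: xn w'n; rewrite mem_iota IH eqSS /is_word /= => /andP[? ?] /andP[-> ->]; lia.
case: w => // x w; rewrite eqSS => /andP[sw /andP[xn wn]].
by exists (x, w); rewrite /= ?IH ?sw ?mem_iota //; lia.
Qed.

Definition is_filling (n : nat) (sh : seq nat) (T : seq (seq nat)) : bool :=
  all2 (fun w r => (size w == r) && is_word n w) T sh.

Lemma mem_fillings n sh T : (T \in fillings n sh) = is_filling n sh T.
Proof.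
elim: sh T => [|r sh IH] T /=; first by rewrite inE; case: T.
apply/allpairsP/idP => [[[w T'] /= [hw hT ->]]|].
  by rewrite /is_filling /= -/(is_filling n sh T') -IH hT andbT -mem_words.
case: T => // w T /andP[hw hT].
by exists (w, T); rewrite /= ?mem_words ?IH.
Qed.

Lemma size_filling n sh T : is_filling n sh T -> size T = size sh.
Proof. by rewrite /is_filling all2E => /andP[/eqP]. Qed.

Lemma filling_row n sh T i : is_filling n sh T -> i < size sh ->
  size (nth [::] T i) = nth 0 sh i /\ is_word n (nth [::] T i).
Proof.
elim: sh T i => [|r sh IH] [|w T] [|i] //= /andP[hw hT]; last exact: IH.
by case/andP: hw => /eqP.
Qed.

Lemma filling_flatten n sh T : is_filling n sh T -> is_word n (flatten T).
Proof.
elim: sh T => [|r sh IH] [|w T] //= /andP[/andP[_ hw] /IH hT].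
by rewrite /is_word all_cat; apply/andP.
Qed.

Lemma filling_intro n sh T : size T = size sh ->
  (forall i, i < size sh -> size (nth [::] T i) = nth 0 sh i /\ is_word n (nth [::] T i)) ->
  is_filling n sh T.
Proof.
elim: sh T => [|r sh IH] [|w T] //= [sT] h.
have [-> ->] := h 0 isT; rewrite eqxx /=.
by apply: IH => // i hi; apply: (h i.+1).
Qed.

Lemma count_nth (a : pred nat) s : count a s = \sum_(i < size s) a (nth 0 s i).
Proof.
rewrite -sum1_count (big_nth 0) big_mkcond /= big_mkord.
by apply: eq_bigr => i _; case: (a _).
Qed.

Definition col_distinct (sh : seq nat) (T : seq (seq nat)) : Prop :=
  forall i j c, i < j -> j < size sh -> c < nth 0 sh i -> c < nth 0 sh j ->
  ent T i c != ent T j c.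

Lemma count_col_distinct_leq_top_sum n sh T (V : seq nat) k :
  is_filling n sh T -> col_distinct sh T -> uniq V -> size V <= k ->
  count (mem V) (flatten T) <= top_sum k sh.
Proof.
move=> fT cd uV sV; have sT := size_filling fT.
have -> : count (mem V) (flatten T) =
    \sum_(i < size sh) \sum_(c < sumn sh) ((c < nth 0 sh i) && (ent T i c \in V)).
  rewrite count_flatten sumnE big_map (big_nth [::]) sT big_mkord.
  apply: eq_bigr => i _; rewrite count_nth (proj1 (filling_row fT (ltn_ord i))).
  have le_sh : nth 0 sh i <= sumn sh.
    by case: (ltnP i (size sh)) => [/(mem_nth 0)/mem_leq_sumn|/(nth_default 0)->].
  rewrite (big_ord_widen _ (fun c => (ent T i c \in V) : nat) le_sh) big_mkcond.
  by apply: eq_bigr => c _; case: ifP.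
rewrite exchange_big top_sum_conjugate; apply: leq_sum => c _.
set P := fun i : 'I_(size sh) => (c < nth 0 sh i) && (ent T i c \in V).
have -> : \sum_i (P i : nat) = #|[set i | P i]|.
  by rewrite -sum1_card [RHS]big_mkcond; apply: eq_bigr => i _; rewrite inE; case: (P i).
rewrite leq_min; apply/andP; split.
  rewrite (leq_trans _ sV) // cardE -(size_map (fun i : 'I_(size sh) => ent T i c)).
  apply: uniq_leq_size => [|x /mapP[i]]; last by rewrite mem_enum inE => /andP[_ ?] ->.
  rewrite map_inj_in_uniq ?enum_uniq // => i j.
  rewrite !mem_enum !inE => /andP[hi _] /andP[hj _] e.
  apply/val_inj/eqP; case: (ltngtP i j) => // h.
    by have := cd i j c h (ltn_ord j) hi hj; rewrite e eqxx.
  by have := cd j i c h (ltn_ord i) hj hi; rewrite e eqxx.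
rewrite count_nth -sum1_card big_mkcond; apply: leq_sum => i _.
by rewrite inE /P; case: (c < _); case: (_ \in _).
Qed.

Lemma ssyt_col_distinct n lam T :
  sorted geq lam -> is_filling n lam T -> is_ssyt T -> col_distinct lam T.
Proof.
move=> slam fT /andP[_ /forallP hs] i j c hij hj _ hcj.
have sT := size_filling fT.
have step i' : i' < j -> ent T i' c < ent T i'.+1 c.
  move=> hi'; have hi'T : i' < size T by rewrite sT (ltn_trans hi').
  have hc : c < size (nth [::] T i'.+1).
    rewrite (proj1 (filling_row fT (leq_ltn_trans hi' hj))).
    exact: leq_trans hcj (leq_nth_sorted_geq slam hi').
  exact: (forallP (hs (Ordinal hi'T)) (Ordinal hc)).
suff lt_ij : ent T i c < ent T j c by rewrite neq_ltn lt_ij.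
have mono := @homo_ltn_in _ [pred i' | i' <= j] (ent T ^~ c) (fun x y => x < y).
apply: mono => //; rewrite ?inE ?(ltnW hij) //; first exact: ltn_trans.
  by move=> x y _; rewrite inE => hy k /andP[_ ky]; rewrite inE ltnW // (leq_trans ky hy).
by move=> x _; rewrite inE; apply: step.
Qed.

(** * Composition tableaux *)

Section CompositionTableaux.
Variables (n : nat) (a : seq nat) (T : seq (seq nat)).
Hypothesis ctT : is_ct a T.

Lemma ct_row_sorted i : sorted geq (nth [::] T i).
Proof.
case/andP: ctT => /andP[/allP rows _] _.
by case: (ltnP i (size T)) => [/(mem_nth [::])/rows|/(nth_default [::])->].
Qed.

Lemma ct_col0_lt i j : i < j -> j < size a -> ent T i 0 < ent T j 0.
Proof.
case/andP: ctT => /andP[_ /forallP col0] _ hij hj.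
by have /implyP := forallP (col0 (Ordinal (ltn_trans hij hj))) (Ordinal hj); apply.
Qed.

Lemma ct_col_distinct : col_distinct a T.
Proof.
move=> i j [|c] hij hj hci hcj; first by rewrite neq_ltn ct_col0_lt.
case/andP: ctT => _ /forallP ct3.
have hk : c.+1 < \max_(x <- a) x.
  rewrite (leq_trans hci) // (@leq_bigmax_seq _ _ xpredT (fun x => x)) //.
  exact: mem_nth (ltn_trans hij hj).
have := forallP (forallP (ct3 (Ordinal (ltn_trans hij hj))) (Ordinal hj)) (Ordinal hk).
rewrite /= hij hci hcj /=; apply: contraL => /eqP e.
case: ifP => _; [rewrite -e | rewrite e]; rewrite ltnn /= -leqNgt.
  exact: leq_nth_sorted_geq (ct_row_sorted i) (leqnSn c).
exact: leq_nth_sorted_geq (ct_row_sorted j) (leqnSn c.+1).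
Qed.

Lemma ct_ent_leq j c : is_composition a -> is_filling n a T -> j < size a ->
  ent T j c <= n - size a + j.+1.
Proof.
move=> ca fT hj; rewrite (leq_trans (leq_nth_sorted_geq (ct_row_sorted j) (leq0n c))) //.
suff bound m j' : j' + m = (size a).-1 -> ent T j' 0 + m <= n.
  by have := bound ((size a).-1 - j) j; rewrite /ent; lia.
elim: m j' => [|m IH] j' hm.
  have hl : j' < size a by lia.
  have [hs w] := filling_row fT hl.
  have : ent T j' 0 \in nth [::] T j'.
    by rewrite mem_nth // hs; move/allP: ca; apply; apply: mem_nth.
  by move/allP: w => w /w /andP[_]; rewrite addn0.
have := ct_col0_lt (ltnSn j') (_ : j'.+1 < size a).
have := IH j'.+1 (_ : j'.+1 + m = (size a).-1).
lia.
Qed.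

End CompositionTableaux.

(* [a] right-aligned in [n] slots: the content of the canonical tableau of shape [a]. *)
Definition padl (n : nat) (a : seq nat) : seq nat := nseq (n - size a) 0 ++ a.

(* Each row holds the largest value that [ct_ent_leq] allows in it. *)
Definition canon_ct (n : nat) (b : seq nat) : seq (seq nat) :=
  [seq nseq (nth 0 b j) (n - size b + j.+1) | j <- iota 0 (size b)].

Section CanonicalTableau.
Variables (n : nat) (b : seq nat).

Lemma size_canon_ct : size (canon_ct n b) = size b.
Proof. by rewrite size_map size_iota. Qed.

Lemma nth_canon_ct j : j < size b ->
  nth [::] (canon_ct n b) j = nseq (nth 0 b j) (n - size b + j.+1).
Proof. by move=> hj; rewrite (nth_map 0) ?size_iota // nth_iota. Qed.

Lemma ent_canon_ct j c : j < size b -> c < nth 0 b j ->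
  ent (canon_ct n b) j c = n - size b + j.+1.
Proof. by move=> hj hc; rewrite /ent nth_canon_ct // nth_nseq hc. Qed.

Lemma canon_ct_filling : size b <= n -> is_filling n b (canon_ct n b).
Proof.
move=> bn; apply: filling_intro => [|i hi]; first exact: size_canon_ct.
rewrite nth_canon_ct // size_nseq; split => //.
by apply/allP => x; rewrite mem_nseq => /andP[_ /eqP ->]; lia.
Qed.

Lemma canon_ct_is_ct : is_composition b -> is_ct b (canon_ct n b).
Proof.
move=> cb; have pos i : i < size b -> 0 < nth 0 b i.
  by move=> hi; move/allP: cb; apply; apply: mem_nth.
apply/andP; split; [apply/andP; split|].
- by apply/allP => r /mapP[j _ ->]; apply: sorted_geq_nseq.
- apply/forallP => i; apply/forallP => j; apply/implyP => hij.
  by rewrite !ent_canon_ct ?pos //; lia.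
apply/forallP => i; apply/forallP => j; apply/forallP => k; apply/implyP.
move=> /andP[/andP[hij hki] hkj].
rewrite (ent_canon_ct (ltn_ord i) hki) (ent_canon_ct (ltn_ord j) hkj).
case: ifP => h; last by rewrite ent_canon_ct //; lia.
by apply/implyP => hk; rewrite ent_canon_ct //; lia.
Qed.

Lemma count_canon_ct i : size b <= n -> i < n ->
  count_mem i.+1 (flatten (canon_ct n b)) = nth 0 (padl n b) i.
Proof.
move=> bn hi; rewrite count_flatten sumnE !big_map.
rewrite (eq_bigr (fun j => (n - size b + j == i) * nth 0 b j)) => [|j _]; last first.
  by rewrite count_nseq /=; congr (_ * _); apply/eqP; case: eqP; case: eqP; lia.
rewrite nth_cat size_nseq; case: ltnP => h.
  rewrite nth_nseq h big1_seq // => j _.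
  by rewrite (_ : (_ == i) = false) //; apply/negbTE/eqP; lia.
have hj : i - (n - size b) \in iota 0 (size b) by rewrite mem_iota; lia.
rewrite (bigD1_seq _ hj (iota_uniq _ _)) /= big1_seq => [|j /andP[hne _]].
  by rewrite addn0 (_ : (_ == i) = true) ?mul1n //; apply/eqP; lia.
by rewrite (_ : (_ == i) = false) //; apply/negbTE/eqP => e; move/eqP: hne; apply; lia.
Qed.

End CanonicalTableau.

Lemma leqif_sumn_const_bound v r : all (fun x => x <= v) r ->
  sumn r <= size r * v ?= iff (r == nseq (size r) v).
Proof.
elim: r => [|x r IH] //= /andP[xv /IH]; rewrite mulSn eqseq_cons.
exact: leqif_add (leqif_eq xv).
Qed.

Lemma sumn_flatten_nth (U : seq (seq nat)) :
  sumn (flatten U) = \sum_(j < size U) sumn (nth [::] U j).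
Proof. by rewrite sumn_flatten sumnE big_map (big_nth [::]) big_mkord. Qed.

Lemma leqif_sumn_ct_canon n b U :
  is_composition b -> size b <= n -> is_filling n b U -> is_ct b U ->
  sumn (flatten U) <= sumn (flatten (canon_ct n b)) ?= iff (U == canon_ct n b).
Proof.
move=> cb bn fU ctU; have sU := size_filling fU.
pose v (j : 'I_(size b)) := n - size b + j.+1.
have row_size (j : 'I_(size b)) : size (nth [::] U j) = nth 0 b j.
  exact: (filling_row fU (ltn_ord j)).1.
have -> : sumn (flatten (canon_ct n b)) = \sum_(j < size b) size (nth [::] U j) * v j.
  rewrite sumn_flatten_nth size_canon_ct; apply: eq_bigr => j _.
  by rewrite nth_canon_ct // sumn_nseq row_size mulnC.
rewrite sumn_flatten_nth sU.
have -> : (U == canon_ct n b) =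
    [forall j : 'I_(size b), nth [::] U j == nseq (size (nth [::] U j)) (v j)].
  apply/eqP/forallP => [-> j|eq_rows]; first by rewrite nth_canon_ct // size_nseq.
  apply: (@eq_from_nth _ [::]) => [|j]; rewrite ?size_canon_ct // sU => hj.
  by rewrite nth_canon_ct // (eqP (eq_rows (Ordinal hj))) row_size.
apply: leqif_sum => j _; apply: leqif_sumn_const_bound.
by apply/(all_nthP 0) => c _; apply: ct_ent_leq.
Qed.

(** * Contents and coefficients *)

Lemma count_mem_uniq_sum (V s : seq nat) : uniq V ->
  count (mem V) s = \sum_(v <- V) count_mem v s.
Proof.
move=> uV; elim: s => [|x s IH] /=; first by rewrite big1.
rewrite big_split /= -IH; congr (_ + _).
rewrite -(count_uniq_mem x uV) -sum1_count big_mkcond /=.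
by apply: eq_bigr => v _; rewrite eq_sym; case: (_ == _).
Qed.

Lemma sum_count_col_distinct_leq_top_sum n sh T k (J : {set 'I_n}) :
  is_filling n sh T -> col_distinct sh T -> #|J| <= k ->
  \sum_(i in J) count_mem i.+1 (flatten T) <= top_sum k sh.
Proof.
move=> fT cd hJ; set V := [seq i.+1 | i : 'I_n <- enum J].
have uV : uniq V by rewrite map_inj_uniq ?enum_uniq // => x y [] /val_inj.
have -> : \sum_(i in J) count_mem i.+1 (flatten T) = count (mem V) (flatten T).
  by rewrite count_mem_uniq_sum // big_map big_enum.
by apply: count_col_distinct_leq_top_sum fT cd uV _; rewrite size_map -cardE.
Qed.

Definition content (n : nat) (T : seq (seq nat)) : 'X_{1..n} :=
  [multinom count_mem i.+1 (flatten T) | i < n].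

Definition pad_mnm (n : nat) (a : seq nat) : 'X_{1..n} :=
  [multinom nth 0 (padl n a) i | i < n].

Definition weight (n : nat) (a : seq nat) : nat :=
  \sum_(i < n) i.+1 * nth 0 (padl n a) i.

Lemma size_padl n a : size a <= n -> size (padl n a) = n.
Proof. by rewrite size_cat size_nseq; lia. Qed.

Lemma pad_mnm_inj n a b : is_composition a -> is_composition b ->
  size a <= n -> size b <= n -> pad_mnm n a = pad_mnm n b -> a = b.
Proof.
have unpad c : is_composition c -> filter (fun x => 0 < x) (padl n c) = c.
  by move=> cc; rewrite filter_cat (all_filterP cc); elim: (n - size c).
move=> ca cb an bn e; rewrite -(unpad a ca) -(unpad b cb); congr filter.
apply: (@eq_from_nth _ 0) => [|i]; rewrite ?size_padl // => hi.
by have := congr1 (fun m : 'X_{1..n} => m (Ordinal hi)) e; rewrite /= !mnmE.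
Qed.

Lemma sumn_word_weight n s : is_word n s -> sumn s = \sum_(i < n) i.+1 * count_mem i.+1 s.
Proof.
elim: s => [|x s IH]; first by rewrite big1 // => i _; rewrite muln0.
case/andP=> /andP[x0 xn] ws; rewrite /= IH //; have hx : x.-1 < n by lia.
rewrite [RHS](eq_bigr (fun i : 'I_n => i.+1 * (x == i.+1) + i.+1 * count_mem i.+1 s));
  last by move=> i _; rewrite mulnDr.
rewrite [RHS]big_split; congr (_ + _); rewrite (bigD1 (Ordinal hx)) // big1 => [|i /eqP hi].
  by rewrite /= prednK // eqxx muln1 addn0.
rewrite (_ : (x == i.+1) = false) ?muln0 //.
by apply/negbTE/eqP => e; apply/hi/val_inj => /=; lia.
Qed.

Lemma content_canon_ct n b : size b <= n -> content n (canon_ct n b) = pad_mnm n b.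
Proof. by move=> bn; apply/mnmP => i; rewrite !mnmE count_canon_ct. Qed.

Section ContentDominance.
Variables (n : nat) (a b : seq nat) (U : seq (seq nat)).
Hypotheses (fU : is_filling n b U) (ctU : is_ct b U) (contU : content n U = pad_mnm n a).

Lemma count_content (i : 'I_n) : count_mem i.+1 (flatten U) = nth 0 (padl n a) i.
Proof. by have := congr1 (fun m : 'X_{1..n} => m i) contU; rewrite /= !mnmE. Qed.

Lemma top_sum_ct_content k : size a <= n -> top_sum k a <= top_sum k b.
Proof.
move=> an; rewrite -(top_sum_nseq0 k (n - size a)) -/(padl n a).
have [J hJ <-] := top_sum_attained k (size_padl an).
rewrite -(eq_bigr _ (fun i _ => count_content i)).
exact: sum_count_col_distinct_leq_top_sum fU (ct_col_distinct ctU) hJ.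
Qed.

Lemma weight_ct_content_lt : is_composition a -> is_composition b ->
  size a <= n -> size b <= n -> a != b -> weight n a < weight n b.
Proof.
move=> ca cb an bn ab.
have -> : weight n a = sumn (flatten U).
  rewrite (sumn_word_weight (filling_flatten fU)).
  by apply: eq_bigr => i _; rewrite count_content.
have -> : weight n b = sumn (flatten (canon_ct n b)).
  rewrite (sumn_word_weight (filling_flatten (canon_ct_filling bn))).
  by apply: eq_bigr => i _; rewrite count_canon_ct.
rewrite (ltn_leqif (leqif_sumn_ct_canon cb bn fU ctU)); apply: contra ab => /eqP eU.
by apply/eqP/(pad_mnm_inj ca cb an bn); rewrite -contU eU content_canon_ct.
Qed.

End ContentDominance.

Lemma mem_comps_upto k d a :
  (a \in comps_upto k d) = [&& is_composition a, sumn a == d & size a <= k].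
Proof.
elim: k d a => [|k IH] d a; rewrite /= ?mem_cat.
  by case: a => [|x a]; case: d => [|d]; rewrite ?inE ?andbF.
case: a => [|p s].
  by rewrite orbC; case: allpairsPdep => [[x [y [_ _ //]]]|_]; case: d.
rewrite (_ : (p :: s \in _) = false) ?orFb; last by case: (d == 0).
apply/allpairsPdep/idP => [[x [y [+ + [-> ->]]]]|].
  rewrite mem_iota IH => /andP[x0 xd] /and3P[cy /eqP sy yk] /=.
  by rewrite x0 cy ltnS yk andbT; apply/eqP; lia.
case/and3P => /andP[p0 cs] /eqP sd sk; exists p, s; split => //; move: sd sk => /= sd sk.
  by rewrite mem_iota; apply/andP; split; lia.
by rewrite IH -ltnS sk andbT; apply/andP; split; [exact: cs | apply/eqP; lia].
Qed.

Definition ct_count (n : nat) (b : seq nat) (m : 'X_{1..n}) : nat :=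
  count (fun U => is_ct b U && (content n U == m)) (fillings n b).

Lemma ct_count_pad_gt0 n a :
  is_composition a -> size a <= n -> 0 < ct_count a (pad_mnm n a).
Proof.
move=> ca an; rewrite -has_count; apply/hasP; exists (canon_ct n a).
  by rewrite mem_fillings canon_ct_filling.
by rewrite canon_ct_is_ct // content_canon_ct // eqxx.
Qed.

Lemma ct_count_pad_dominance n a b :
  is_composition a -> size a <= n -> is_composition b -> size b <= n ->
  0 < ct_count b (pad_mnm n a) ->
  (forall k, top_sum k a <= top_sum k b) /\ (b != a -> weight n a < weight n b).
Proof.
move=> ca an cb bn; rewrite -has_count => /hasP[U].
rewrite mem_fillings => fU /andP[ctU /eqP contU]; split => [k|ba].
  exact: (top_sum_ct_content fU ctU contU k an).
by apply: (weight_ct_content_lt fU ctU contU ca cb an bn); rewrite eq_sym.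
Qed.

Local Open Scope ring_scope.

Lemma mono_content n T : mono n T = 'X_[content n T].
Proof. by rewrite mpolyXE_id; apply: eq_bigr => i _; rewrite mnmE. Qed.

Lemma mcoeff_qschur n b m : (qschur n b)@_m = (ct_count b m)%:R.
Proof.
rewrite /qschur /ct_count raddf_sum -sum1_count natr_sum big_mkcond [RHS]big_mkcond /=.
apply: eq_bigr => U _; rewrite mono_content mcoeffX.
by case: (is_ct b U); case: (_ == _).
Qed.

Lemma mcoeff_sum_qschur n (L : seq (seq nat)) (c : seq nat -> rat) m :
  (\sum_(b <- L) c b *: qschur n b)@_m = \sum_(b <- L) c b * (ct_count b m)%:R.
Proof. by rewrite raddf_sum; apply: eq_bigr => b _; rewrite /= mcoeffZ mcoeff_qschur. Qed.

Lemma mcoeff_schur_qschur_pad_eq0 n lam beta a k :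
  is_partition lam -> (size a <= n)%N ->
  (top_sum k (phi lam beta) < top_sum k a)%N ->
  (schur n lam * qschur n beta)@_(pad_mnm n a) = 0.
Proof.
move=> /andP[_ slam] an bad.
rewrite /schur /qschur mulr_suml raddf_sum big1_seq // => T /andP[ssT].
rewrite mem_fillings => fT; rewrite mulr_sumr raddf_sum big1_seq // => U /andP[ctU].
rewrite mem_fillings => fU /=; rewrite !mono_content -mpolyXD mcoeffX.
case: eqP => // contTU; exfalso; move: bad; apply/negP; rewrite -leqNgt.
rewrite -(top_sum_nseq0 k (n - size a)) -/(padl n a).
have [J hJ <-] := top_sum_attained k (size_padl an).
have split_content (i : 'I_n) : nth 0 (padl n a) i =
    (count_mem i.+1 (flatten T) + count_mem i.+1 (flatten U))%N.
  by have := congr1 (fun m : 'X_{1..n} => m i) contTU; rewrite /= mnmDE !mnmE.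
rewrite (eq_bigr _ (fun i _ => split_content i)) big_split /=.
apply: leq_trans (leq_top_sum_phi lam beta k); rewrite -top_sum_sorted //.
apply: leq_add.
  exact: sum_count_col_distinct_leq_top_sum fT (ssyt_col_distinct slam fT ssT) hJ.
exact: sum_count_col_distinct_leq_top_sum fU (ct_col_distinct ctU) hJ.
Qed.

Lemma triangular_system_eq0 (R : numDomainType) (I : eqType) (L : seq I)
    (N : I -> I -> nat) (w : I -> nat) (P : I -> Prop) (c : I -> R) :
  (forall a, a \in L -> P a -> \sum_(b <- L) c b * (N b a)%:R = 0) ->
  (forall a, a \in L -> (0 < N a a)%N) ->
  (forall a b, a \in L -> b \in L -> P a -> b != a -> (0 < N b a)%N ->
     P b /\ (w a < w b)%N) ->
  forall a, a \in L -> P a -> c a = 0.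
Proof.
move=> eqs diag upper; pose W := (\max_(b <- L) w b)%N.
have wW b : b \in L -> (w b <= W)%N by move=> bL; apply: leq_bigmax_seq.
suff IH m a : (W - w a)%N = m -> a \in L -> P a -> c a = 0 by move=> a; apply: IH.
elim/ltn_ind: m a => m IH a wa aL Pa.
have only_diag b : b \in L -> c b * (N b a)%:R = (b == a)%:R * (c a * (N a a)%:R).
  move=> bL; have [->|ba] := eqVneq b a; first by rewrite mul1r.
  rewrite mul0r; have [->|/(upper a b aL bL Pa ba) [Pb wab]] := posnP (N b a).
    by rewrite mulr0.
  by rewrite (IH (W - w b)%N) ?mul0r //; have := wW b bL; lia.
move/eqP: (eqs a aL Pa); rewrite (eq_big_seq _ only_diag) -mulr_suml -natr_sum.
rewrite (_ : (\sum_(b <- L) (b == a))%N = count_mem a L); last first.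
  by rewrite -sum1_count [RHS]big_mkcond /=; apply: eq_bigr => b _; case: (_ == _).
by rewrite !mulf_eq0 !pnatr_eq0 !eqn0Ngt -has_count has_pred1 aL diag //= orbF => /eqP.
Qed.

Theorem theorem5p5 (n d : nat) (lam beta alpha : seq nat) :
  (1 <= n)%N ->
  is_partition lam -> in_Bn n beta ->
  (size lam <= n)%N -> (size beta <= n)%N ->
  (sumn lam + sumn beta)%N = d ->
  is_composition alpha -> sumn alpha = d -> (size alpha <= n)%N ->
  ~ dominates (sort_dec (phi lam beta)) (sort_dec alpha) ->
  forall c : seq nat -> rat,
    schur n lam * qschur n beta = \sum_(a <- comps_upto n d) c a *: qschur n a ->
    c alpha = 0.
Proof.
move=> _ lam_part _ _ _ _ ca sum_alpha alpha_n not_dom c expansion.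
have comp_of a : a \in comps_upto n d -> is_composition a /\ (size a <= n)%N.
  by rewrite mem_comps_upto => /and3P[].
pose P a := exists k, (top_sum k (phi lam beta) < top_sum k a)%N.
have eqs a : a \in comps_upto n d -> P a ->
    \sum_(b <- comps_upto n d) c b * (ct_count b (pad_mnm n a))%:R = 0.
  move=> aL [k bad]; rewrite -mcoeff_sum_qschur -expansion.
  exact: mcoeff_schur_qschur_pad_eq0 lam_part (comp_of a aL).2 bad.
have diag a : a \in comps_upto n d -> (0 < ct_count a (pad_mnm n a))%N.
  by case/comp_of; apply: ct_count_pad_gt0.
have upper a b : a \in comps_upto n d -> b \in comps_upto n d -> P a -> b != a ->
    (0 < ct_count b (pad_mnm n a))%N -> P b /\ (weight n a < weight n b)%N.
  move=> /comp_of[ca' an] /comp_of[cb bn] [k bad] ba pos.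
  have [tops wlt] := ct_count_pad_dominance ca' an cb bn pos.
  by split; [exists k; apply: leq_trans bad (tops k) | exact: wlt].
have [//|/eqP c_alpha] := eqVneq (c alpha) 0; case: not_dom => k.
rewrite leqNgt; apply/negP => bad; apply: c_alpha.
apply: (triangular_system_eq0 eqs diag upper); last by exists k.
by rewrite mem_comps_upto ca sum_alpha eqxx alpha_n.
Qed.
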